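(* Let $\Lambda\in\mathbb{R}^{p\times p}$ be a connected discrete-time interconnection, $r\in\mathbb{R}^p$ with $r^T\Lambda=r^T$, $r^T\mathbf 1=1$, and $\Omega$ symmetric positive definite with $(\Lambda-\mathbf 1r^T)^T\Omega(\Lambda-\mathbf 1r^T)-\Omega=-I_p$. Define $V(\mathbf x):=\mathbf x^T(\Omega\otimes I_n)\mathbf x$. Then for every $Q:\mathbb{N}\to\overline{\mathcal Q}_n$ and all $k\in\mathbb{N}$, the solution of $\mathbf x^+=(I_{np}+(\Lambda-I_p)\otimes Q_k)\mathbf x$ satisfies $$V(\mathbf x(k+1)-\bar{\mathbf x})-V(\mathbf x(k)-\bar{\mathbf x})\le-(\mathbf x(k)-\bar{\mathbf x})^T(I_p\otimes Q_k^2)(\mathbf x(k)-\bar{\mathbf x}),$$ where $\bar{\mathbf x}:=(\mathbf 1r^T\otimes I_n)\mathbf x(0)$.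
   Context: $\mathbf 1$ all-ones vector; $\otimes$ Kronecker product; $\overline{\mathcal Q}_n$ symmetric positive semidefinite $n\times n$ matrices with induced 2-norm at most $1$. Discrete-time interconnection: $\lambda_{ij}\ge0$, row sums $1$; graph edge $(n_i,n_j)$ iff $\lambda_{ij}>0$; connected if some node is reachable by a directed path from every other node. *)

From mathcomp Require Import all_boot all_order all_algebra.
From mathcomp Require Export mxtens.
Set Implicit Arguments. Unset Strict Implicit. Unset Printing Implicit Defensive.
Import Order.TTheory GRing.Theory Num.Theory.
Local Open Scope ring_scope.

Definition ones (R : pzRingType) (p : nat) : 'cV[R]_p := const_mx 1.

Definition qform (R : pzRingType) (m : nat) (A : 'M[R]_m) (x : 'cV[R]_m) : R :=
  (x^T *m A *m x) 0 0.

Definition sym_mx (R : pzRingType) (m : nat) (A : 'M[R]_m) : Prop := A^T = A.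

Definition psd_mx (R : numDomainType) (m : nat) (A : 'M[R]_m) : Prop :=
  sym_mx A /\ forall v : 'cV[R]_m, 0 <= qform A v.

Definition pd_mx (R : numDomainType) (m : nat) (A : 'M[R]_m) : Prop :=
  sym_mx A /\ forall v : 'cV[R]_m, v != 0 -> 0 < qform A v.

Definition norm2_le1 (R : numDomainType) (m : nat) (A : 'M[R]_m) : Prop :=
  forall v : 'cV[R]_m, ((A *m v)^T *m (A *m v)) 0 0 <= (v^T *m v) 0 0.

Definition Qbar (R : numDomainType) (n : nat) (A : 'M[R]_n) : Prop :=
  psd_mx A /\ norm2_le1 A.

Definition edge_rel (R : numDomainType) (p : nat) (L : 'M[R]_p) : rel 'I_p :=
  fun i j => 0 < L i j.

Definition dt_interconnection (R : numDomainType) (p : nat) (L : 'M[R]_p) : Prop :=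
  (forall i j, 0 <= L i j) /\ (forall i, \sum_j L i j = 1).

Definition connected_graph (R : numDomainType) (p : nat) (L : 'M[R]_p) : Prop :=
  exists k : 'I_p, forall j : 'I_p, connect (edge_rel L) j k.

(* With P := 1 r^T and D := L - P - I, the error e := x - xbar satisfies
   (P ⊗ I) e = 0 and hence evolves by e+ = (I + D ⊗ Q) e.  In terms of D the
   Lyapunov equation reads D^T Ω + Ω D = -K with K := D^T Ω D + I, so expanding
   V(e+) gives
     V(e+) - V(e) + e^T (I ⊗ Q^2) e = - e^T (K ⊗ (Q - Q^2)) e.
   Both K and Q - Q^2 = (I - Q) Q (I - Q) + Q (I - Q) Q are positive
   semidefinite (the latter because 0 <= Q <= I), and so is their Kronecker
   product. *)

From mathcomp Require Import all_boot all_order all_algebra.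
From mathcomp Require Import mxtens.
From mathcomp Require Import ring lra zify.
Import Order.TTheory GRing.Theory Num.Theory.
Set Implicit Arguments. Unset Strict Implicit. Unset Printing Implicit Defensive.
Local Open Scope ring_scope.

Section TensorLinearity.
Variable R : comPzRingType.

Lemma tensmxDl m n p q (A B : 'M[R]_(m, n)) (C : 'M[R]_(p, q)) :
  (A + B) *t C = A *t C + B *t C.
Proof. by apply/matrixP=> i j; rewrite !mxE mulrDl. Qed.

Lemma tensmxDr m n p q (A : 'M[R]_(m, n)) (B C : 'M[R]_(p, q)) :
  A *t (B + C) = A *t B + A *t C.
Proof. by apply/matrixP=> i j; rewrite !mxE mulrDr. Qed.

Lemma tensmxNl m n p q (A : 'M[R]_(m, n)) (C : 'M[R]_(p, q)) :
  (- A) *t C = - (A *t C).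
Proof. by apply/matrixP=> i j; rewrite !mxE mulNr. Qed.

Lemma tensmxNr m n p q (A : 'M[R]_(m, n)) (C : 'M[R]_(p, q)) :
  A *t (- C) = - (A *t C).
Proof. by apply/matrixP=> i j; rewrite !mxE mulrN. Qed.

Lemma tensmxZr m n p q (A : 'M[R]_(m, n)) (d : R) (C : 'M[R]_(p, q)) :
  A *t (d *: C) = d *: (A *t C).
Proof. by apply/matrixP=> i j; rewrite !mxE mulrCA. Qed.

End TensorLinearity.

Section QuadraticForm.
Variable R : comPzRingType.

Definition bform m (A : 'M[R]_m) (x y : 'cV[R]_m) : R := (x^T *m A *m y) 0 0.

Lemma qformD m (A B : 'M[R]_m) x : qform (A + B) x = qform A x + qform B x.
Proof. by rewrite /qform mulmxDr mulmxDl mxE. Qed.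

Lemma qformN m (A : 'M[R]_m) x : qform (- A) x = - qform A x.
Proof. by rewrite /qform mulmxN mulNmx mxE. Qed.

Lemma qformB m (A B : 'M[R]_m) x : qform (A - B) x = qform A x - qform B x.
Proof. by rewrite qformD qformN. Qed.

Lemma qformZ m (d : R) (A : 'M[R]_m) x : qform (d *: A) x = d * qform A x.
Proof. by rewrite /qform -scalemxAr -scalemxAl mxE. Qed.

Lemma qform0 m (x : 'cV[R]_m) : qform 0 x = 0.
Proof. by rewrite /qform mulmx0 mul0mx mxE. Qed.

Lemma qform_mulmx m k (A : 'M[R]_m) (B : 'M[R]_(m, k)) x :
  qform (B^T *m A *m B) x = qform A (B *m x).
Proof. by rewrite /qform trmx_mul !mulmxA. Qed.

Lemma qform_castmx m m' (E : m = m') (A : 'M[R]_m) (y : 'cV[R]_m') :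
  qform (castmx (E, E) A) y = qform A (castmx (esym E, erefl) y).
Proof. by case: m' / E y => y; rewrite !castmx_id. Qed.

Lemma bform_sym m (A : 'M[R]_m) x y : A^T = A -> bform A y x = bform A x y.
Proof.
move=> symA; rewrite /bform -[in LHS]symA -[x in LHS]trmxK -!trmx_mul mulmxA.
by rewrite mxE.
Qed.

Lemma qform_addZ m (A : 'M[R]_m) x y t : A^T = A ->
  qform A (x + t *: y) = qform A x + 2 * t * bform A x y + t ^+ 2 * qform A y.
Proof.
move=> symA; have := bform_sym x y symA; rewrite /bform /qform => sym_xy.
have -> : (x + t *: y)^T = x^T + t *: y^T by rewrite linearD linearZ.
rewrite !mulmxDr !mulmxDl -!scalemxAr -!scalemxAl !mxE.
by rewrite !mxE in sym_xy; rewrite sym_xy; ring.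
Qed.

Lemma qform_outer m (u x : 'cV[R]_m) : qform (u *m u^T) x = bform 1%:M x u ^+ 2.
Proof.
rewrite /qform /bform mulmx1 mulmxA -mulmxA mxE big_ord1 expr2; congr (_ * _).
by rewrite -[u in RHS]trmxK -trmx_mul [RHS]mxE.
Qed.

End QuadraticForm.

Section Semidefinite.
Variable R : realFieldType.

Lemma psd_mx1 m : psd_mx (1%:M : 'M[R]_m).
Proof.
split=> [|v]; first exact: trmx1.
rewrite /qform mulmx1 mxE; apply: sumr_ge0 => i _.
by rewrite mxE -expr2 sqr_ge0.
Qed.

Lemma pd_psd_mx m (A : 'M[R]_m) : pd_mx A -> psd_mx A.
Proof.
case=> symA posA; split=> // v; have [->|/posA/ltW //] := eqVneq v 0.
by rewrite /qform mulmx0 mxE.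
Qed.

Lemma psd_mxD m (A B : 'M[R]_m) : psd_mx A -> psd_mx B -> psd_mx (A + B).
Proof.
case=> symA psdA [symB psdB]; split=> [|v]; first by rewrite /sym_mx linearD /= symA symB.
by rewrite qformD addr_ge0.
Qed.

Lemma psd_mx_congr m k (A : 'M[R]_m) (B : 'M[R]_(m, k)) :
  psd_mx A -> psd_mx (B^T *m A *m B).
Proof.
case=> symA psdA; split=> [|v]; last by rewrite qform_mulmx.
by rewrite /sym_mx !trmx_mul trmxK symA mulmxA.
Qed.

Lemma psd_bform_sqr_le m (A : 'M[R]_m) x y : psd_mx A ->
  bform A x y ^+ 2 <= qform A x * qform A y.
Proof.
case=> symA psdA.
have Hq t : 0 <= qform A x + 2 * t * bform A x y + t ^+ 2 * qform A y.
  by rewrite -qform_addZ.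
have ha := psdA y; have hc := psdA x.
set a := qform A y in Hq ha *; set c := qform A x in Hq hc *.
set b := bform A x y in Hq *.
have [a_gt0|a_le0] := ltP 0 a.
  have := Hq (- b / a).
  have -> : c + 2 * (- b / a) * b + (- b / a) ^+ 2 * a = c - b ^+ 2 / a.
    by field; rewrite gt_eqF.
  by rewrite subr_ge0 ler_pdivrMr.
have a0 : a = 0 by apply/eqP; rewrite eq_le a_le0 ha.
rewrite a0 mulr0 in Hq *.
have [->|b_neq0] := eqVneq b 0; first by rewrite expr0n.
have := Hq (- (c + 1) / (2 * b)).
have -> : c + 2 * (- (c + 1) / (2 * b)) * b + (- (c + 1) / (2 * b)) ^+ 2 * 0 = -1.
  by field; rewrite b_neq0.
by rewrite ler0N1.
Qed.

Lemma psd_qform_eq0 m (A : 'M[R]_m) e : psd_mx A -> qform A e = 0 -> A *m e = 0.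
Proof.
move=> psdA qe0; apply/matrixP=> i k; rewrite [k]ord1 [RHS]mxE.
have := psd_bform_sqr_le (delta_mx i 0) e psdA; rewrite qe0 mulr0.
have -> : bform A (delta_mx i 0) e = (A *m e) i 0.
  by rewrite /bform trmx_delta -mulmxA -rowE mxE.
by move=> le0; apply/eqP; rewrite -sqrf_eq0 eq_le le0 sqr_ge0.
Qed.

End Semidefinite.
Arguments psd_mx1 {R m}.

Section Contraction.
Variables (R : realFieldType) (n : nat) (Q : 'M[R]_n).
Hypothesis Q_Qbar : Qbar Q.

Lemma Qbar_psd_1B : psd_mx (1%:M - Q).
Proof.
have [[symQ psdQ] normQ] := Q_Qbar.
split=> [|v]; first by rewrite /sym_mx linearB /= trmx1 symQ.
have := psd_bform_sqr_le v (Q *m v) psd_mx1.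
have -> : bform 1%:M v (Q *m v) = qform Q v by rewrite /bform mulmx1 mulmxA.
have : qform 1%:M (Q *m v) <= qform 1%:M v by rewrite /qform !mulmx1; exact: normQ.
have := psdQ v; have := psd_mx1.2 v.
rewrite qformB; nra.
Qed.

Lemma Qbar_psd_subr_sqr : psd_mx (Q - Q *m Q).
Proof.
have [[symQ psdQ] _] := Q_Qbar.
have -> : Q - Q *m Q = (1%:M - Q)^T *m Q *m (1%:M - Q) + Q^T *m (1%:M - Q) *m Q.
  have -> : (1%:M - Q)^T = 1%:M - Q by rewrite linearB /= trmx1 symQ.
  rewrite symQ !(mulmxBl, mulmxBr) !(mul1mx, mulmx1) -!mulmxA.
  by rewrite subrK.
by apply: psd_mxD; apply: psd_mx_congr; [case: Q_Qbar | exact: Qbar_psd_1B].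
Qed.

End Contraction.

Section KroneckerSemidefinite.
Variable R : realFieldType.

Definition schur_reduce n (N : 'M[R]_n) (e : 'cV[R]_n) : 'M[R]_n :=
  N - (qform N e)^-1 *: (N *m e *m (N *m e)^T).

Lemma schur_reduce_psd n (N : 'M[R]_n) e :
  psd_mx N -> 0 < qform N e -> psd_mx (schur_reduce N e).
Proof.
move=> psdN a_gt0; have [symN _] := psdN; split=> [|v].
  by rewrite /sym_mx /schur_reduce linearB linearZ /= trmx_mul trmxK symN.
rewrite qformB qformZ qform_outer.
have -> : bform 1%:M v (N *m e) = bform N v e by rewrite /bform mulmx1 mulmxA.
rewrite subr_ge0 mulrC ler_pdivrMr //; exact: psd_bform_sqr_le.
Qed.

Lemma schur_reduce_ker n (N : 'M[R]_n) e (f : 'cV[R]_n) :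
  sym_mx N -> N *m f = 0 -> schur_reduce N e *m f = 0.
Proof.
move=> symN Nf0; rewrite mulmxBl Nf0 -scalemxAl -(mulmxA (N *m e)) trmx_mul symN.
by rewrite -(mulmxA e^T) Nf0 !mulmx0 scaler0 subrr.
Qed.

Lemma schur_reduce_kill n (N : 'M[R]_n) e :
  sym_mx N -> qform N e != 0 -> schur_reduce N e *m e = 0.
Proof.
move=> symN a_neq0; rewrite mulmxBl -scalemxAl -(mulmxA (N *m e)) trmx_mul symN.
rewrite [X in N *m e *m X]mx11_scalar -/(qform N e) mul_mx_scalar scalerA.
by rewrite mulVf // scale1r subrr.
Qed.

Lemma psd_tens_outer p n (K : 'M[R]_p) (u : 'cV[R]_n) e :
  psd_mx K -> 0 <= qform (K *t (u *m u^T)) e.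
Proof.
case=> _ psdK.
have -> : K *t (u *m u^T) =
    (1%:M *t u^T)^T *m (K *t (1%:M : 'M[R]_1)) *m (1%:M *t u^T).
  by rewrite trmx_tens trmx1 trmxK !tensmx_mul mul1mx !mulmx1.
by rewrite qform_mulmx tens_mx_scalar scale1r qform_castmx.
Qed.

(* Symmetric Gaussian elimination: peeling the rank-one terms
   [a^-1 (N e_j) (N e_j)^T] off [N], column by column, writes [N] as a nonnegative
   combination of outer products [u *m u^T]; the induction runs on the number [m]
   of columns still to be eliminated. *)
Lemma psd_tens_qform_ge0 p n m (K : 'M[R]_p) (N : 'M[R]_n) :
  psd_mx K -> psd_mx N ->
  (forall i : 'I_n, (i < n - m)%N -> N *m (delta_mx i 0 : 'cV[R]_n) = 0) ->
  forall e, 0 <= qform (K *t N) e.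
Proof.
move=> psdK; elim: m N => [|m IHm] N psdN ker_N e.
  suff -> : N = 0 by rewrite tensmx0 qform0.
  rewrite subn0 in ker_N; apply/matrixP=> i j.
  have /matrixP/(_ i 0) := ker_N j (ltn_ord j).
  by rewrite -colE !mxE.
have [lt_jn | ge_jn] := ltnP (n - m.+1) n; last first.
  by apply: IHm => // i _; apply: ker_N; exact: leq_trans (ltn_ord i) ge_jn.
pose j := Ordinal lt_jn; pose ej : 'cV[R]_n := delta_mx j 0.
have ker_next (M : 'M[R]_n) :
    (forall i : 'I_n, (i < n - m.+1)%N -> M *m (delta_mx i 0 : 'cV_n) = 0) ->
    M *m ej = 0 -> forall i : 'I_n, (i < n - m)%N -> M *m (delta_mx i 0 : 'cV_n) = 0.
  move=> kerM Mej0 i lt_i; have [lt_ij|le_ji] := ltnP i j; first exact: kerM.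
  by have -> : i = j by apply: ord_inj; move: lt_i le_ji => /=; lia.
have [a_gt0|a_le0] := ltP 0 (qform N ej).
  have -> : N = schur_reduce N ej + (qform N ej)^-1 *: (N *m ej *m (N *m ej)^T).
    by rewrite subrK.
  rewrite tensmxDr tensmxZr qformD qformZ; apply: addr_ge0; last first.
    by apply: mulr_ge0; [rewrite invr_ge0 ltW | exact: psd_tens_outer].
  apply: IHm; first exact: schur_reduce_psd.
  apply: ker_next; last by apply: schur_reduce_kill; [case: psdN | rewrite gt_eqF].
  by move=> i lt_i; apply: schur_reduce_ker; [case: psdN | exact: ker_N].
apply: IHm => //; apply: ker_next => //; apply: psd_qform_eq0 => //.
by apply/eqP; rewrite eq_le a_le0 (proj2 psdN).
Qed.

Lemma psd_tens p n (K : 'M[R]_p) (N : 'M[R]_n) :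
  psd_mx K -> psd_mx N -> psd_mx (K *t N).
Proof.
move=> psdK psdN; split=> [|e]; first by rewrite /sym_mx trmx_tens psdK.1 psdN.1.
by apply: (psd_tens_qform_ge0 (m := n) psdK psdN) => i; rewrite subnn.
Qed.

End KroneckerSemidefinite.

Section Consensus.
Variables (R : realFieldType) (p n : nat) (L : 'M[R]_p) (r : 'cV[R]_p).
Hypotheses (HL : dt_interconnection L) (Hr : r^T *m L = r^T)
  (Hr1 : r^T *m ones R p = 1%:M).

Local Notation P := (ones R p *m r^T).

Lemma stochastic_mul_ones : L *m ones R p = ones R p.
Proof.
apply/matrixP=> i j; rewrite [j]ord1 !mxE -[RHS](HL.2 i).
by apply: eq_bigr => k _; rewrite mxE mulr1.
Qed.

Lemma consensus_proj_idem : P *m P = P.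
Proof. by rewrite -mulmxA (mulmxA r^T) Hr1 mul1mx. Qed.

Lemma stochastic_mul_proj : L *m P = P.
Proof. by rewrite mulmxA stochastic_mul_ones. Qed.

Lemma proj_mul_stochastic : P *m L = P.
Proof. by rewrite -mulmxA Hr. Qed.

Variables (Q : nat -> 'M[R]_n) (x : nat -> 'cV[R]_(p * n)).
Hypothesis Hx : forall k, x k.+1 = (1%:M + (L - 1%:M) *t Q k) *m x k.

Local Notation xbar := ((P *t (1%:M : 'M[R]_n)) *m x 0%N).

Lemma consensus_invariant k : (P *t 1%:M) *m x k = xbar.
Proof.
elim: k => [//|k IHk]; rewrite Hx mulmxA mulmxDr mulmx1 tensmx_mul mulmxBr.
by rewrite proj_mul_stochastic mulmx1 subrr tens0mx addr0.
Qed.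

Lemma consensus_error_step k :
  x k.+1 - xbar = (1%:M + (L - P - 1%:M) *t Q k) *m (x k - xbar).
Proof.
have fixed_xbar : (1%:M + (L - 1%:M) *t Q k) *m xbar = xbar.
  rewrite mulmxA mulmxDl mul1mx tensmx_mul mulmxBl stochastic_mul_proj mul1mx.
  by rewrite subrr tens0mx addr0.
have proj_err0 : (P *t 1%:M) *m (x k - xbar) = 0.
  rewrite mulmxBr consensus_invariant mulmxA tensmx_mul consensus_proj_idem.
  by rewrite mulmx1 subrr.
have -> : L - P - 1%:M = (L - 1%:M) - P by rewrite addrAC.
rewrite Hx -{1}fixed_xbar -mulmxBr [(L - 1%:M - P) *t _]tensmxDl tensmxNl addrA.
have -> : P *t Q k = (1%:M *t Q k) *m (P *t 1%:M) by rewrite tensmx_mul mul1mx mulmx1.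
by rewrite mulmxBl -mulmxA proj_err0 mulmx0 subr0.
Qed.

End Consensus.

Section Energy.
Variable R : comPzRingType.

Lemma lyapunov_shift p (D Om : 'M[R]_p) :
  (D + 1%:M)^T *m Om *m (D + 1%:M) - Om = - 1%:M ->
  D^T *m Om + Om *m D = - (D^T *m Om *m D + 1%:M).
Proof.
have -> : (D + 1%:M)^T = D^T + 1%:M by rewrite linearD /= trmx1.
rewrite !(mulmxDl, mulmxDr) mul1mx !mulmx1 addrA addrK => lyap.
by rewrite -[1%:M]opprK -lyap opprD opprK -addrA addKr addrC.
Qed.

Lemma qform_tens_step p n (Om D : 'M[R]_p) (Q : 'M[R]_n) e : Q^T = Q ->
  qform (Om *t 1%:M) ((1%:M + D *t Q) *m e) =
  qform (Om *t 1%:M) e + qform ((D^T *m Om + Om *m D) *t Q) e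
  + qform ((D^T *m Om *m D) *t (Q *m Q)) e.
Proof.
move=> symQ; rewrite -qform_mulmx.
have -> : (1%:M + D *t Q)^T = 1%:M + D^T *t Q by rewrite linearD /= trmx1 trmx_tens symQ.
rewrite !(mulmxDl, mulmxDr) !(mul1mx, mulmx1) !tensmx_mul !(mul1mx, mulmx1).
rewrite tensmxDl !qformD; ring.
Qed.

End Energy.

Theorem lemma4 (R : realFieldType) (p n : nat)
  (L : 'M[R]_p) (r : 'cV[R]_p) (Om : 'M[R]_p)
  (HL : dt_interconnection L) (Hconn : connected_graph L)
  (Hr : r^T *m L = r^T) (Hr1 : r^T *m ones R p = 1%:M)
  (HOm : pd_mx Om)
  (Hlyap : (L - ones R p *m r^T)^T *m Om *m (L - ones R p *m r^T) - Om
           = - 1%:M)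
  (Q : nat -> 'M[R]_n) (HQ : forall k, Qbar (Q k))
  (x : nat -> 'cV[R]_(p * n))
  (Hx : forall k, x k.+1 = (1%:M + (L - 1%:M) *t Q k) *m x k) :
  let xbar := ((ones R p *m r^T) *t (1%:M : 'M[R]_n)) *m x 0%N in
  let V := fun y : 'cV[R]_(p * n) => qform (Om *t (1%:M : 'M[R]_n)) y in
  forall k : nat,
    V (x k.+1 - xbar) - V (x k - xbar)
    <= - qform ((1%:M : 'M[R]_p) *t (Q k *m Q k)) (x k - xbar).
Proof.
move=> xbar V k; rewrite /V /xbar.
set D := L - ones R p *m r^T - 1%:M.
have [[symQ _] _] := HQ k.
have shift_lyap : D^T *m Om + Om *m D = - (D^T *m Om *m D + 1%:M).
  by apply: lyapunov_shift; rewrite subrK.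
rewrite (consensus_error_step HL Hr Hr1 Hx) -/D qform_tens_step // shift_lyap.
set e := x k - _.
have psdK : psd_mx (D^T *m Om *m D + 1%:M).
  exact: psd_mxD (psd_mx_congr D (pd_psd_mx HOm)) psd_mx1.
have := (psd_tens psdK (Qbar_psd_subr_sqr (HQ k))).2 e.
rewrite tensmxNl !tensmxDl !(tensmxDr, tensmxNr) !(qformD, qformN).
lra.
Qed.
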